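(* Let $X\sim P_X$, teacher partition $(\Omega_k^\star)$ with experts $f_k^\star$, $\mu=\sum_k\mathbf{1}_{\Omega_k^\star}f_k^\star$, $|\mu(X)|\le B$ a.s., $Y=\mu(X)+\xi$ with $\mathbb{E}[\xi\mid X]=0$, $\mathbb{E}\xi^2<\infty$. Let student experts satisfy $\sup_{k,x}|f_k(x;\theta_k)|\le B_{\mathrm{stu}}$ for all parameters considered. Assume there are $\gamma_{\mathrm{gap}}>0$, $\eta_{\mathrm{gap}}\in[0,1)$ such that for every $\theta$ considered there is a permutation $\pi$ with $P_X(\{x\in\Omega_k^\star:(f_j(x;\theta_j)-f_k^\star(x))^2\le\gamma_{\mathrm{gap}}\})\le\eta_{\mathrm{gap}}$ for all $k$ and $j\ne\pi(k)$ (such $\pi$ is an admissible matching for $\theta$). Fix $\varepsilon\in(0,1/2)$ with $2\varepsilon B_{\mathrm{stu}}\le\frac12\sqrt{\gamma_{\mathrm{gap}}}$. Then for all $(\theta,\phi)$, all $\tau>0$ and every admissible matching $\pi$ for $\theta$, \[\mathbb{E}\big[(\mu(X)-h_{\theta,\phi,\tau}(X))^2\mathbf{1}_{\{X\in\mathcal{G}_\varepsilon(\tau;\phi)\}}\big]\ge\frac{\gamma_{\mathrm{gap}}}{4}\max\{P_X(\mathcal{E}_{\mathrm{mis}}(\pi;\theta,\phi,\tau))-K(K-1)\eta_{\mathrm{gap}},0\}.\] Consequently, if $\widetilde L_\tau(\theta,\phi)\le R$ then $P_X(\mathcal{E}_{\mathrm{mis}}(\pi;\theta,\phi,\tau))\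le\frac{4R}{\gamma_{\mathrm{gap}}}+K(K-1)\eta_{\mathrm{gap}}$.
   Context: $p_k^{(\tau)}(x;\phi)=e^{a_k(x;\phi)/\tau}/\sum_je^{a_j(x;\phi)/\tau}$; $h_{\theta,\phi,\tau}=\sum_kp_k^{(\tau)}f_k(\cdot;\theta_k)$; $\widetilde L_\tau(\theta,\phi)=\mathbb{E}[(\mu(X)-h_{\theta,\phi,\tau}(X))^2]$; $\mathcal{G}_\varepsilon(\tau;\phi)=\{x:\max_kp_k^{(\tau)}(x;\phi)>1-\varepsilon\}$; $\mathcal{E}_{\mathrm{mis}}(\pi;\theta,\phi,\tau)=\{x\in\mathcal{X}:x\in\Omega_k^\star\text{ and }p_j^{(\tau)}(x;\phi)\ge1-\varepsilon\text{ for some }k\text{ and some }j\ne\pi(k)\}\cap\mathcal{G}_\varepsilon(\tau;\phi)$. *)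

From HB Require Import structures.
From mathcomp Require Import all_boot all_order all_algebra all_fingroup.
From mathcomp Require Import all_classical all_reals all_analysis.
Set Implicit Arguments. Unset Strict Implicit. Unset Printing Implicit Defensive.
Import Order.TTheory GRing.Theory Num.Theory.
Local Open Scope classical_set_scope.
Local Open Scope ring_scope.

Section MoE.
Context {R : realType} {T : Type} {K : nat} {Theta Phi : Type}.

Definition teacher_mu (Omega : 'I_K -> set T) (fstar : 'I_K -> T -> R) (x : T) : R :=
  \sum_(k < K) \1_(Omega k) x * fstar k x.

Definition gate_p (a : 'I_K -> Phi -> T -> R) (phi : Phi) (tau : R)
  (k : 'I_K) (x : T) : R :=
  expR (a k phi x / tau) / \sum_(j < K) expR (a j phi x / tau).

Definition student_h (f : 'I_K -> Theta -> T -> R) (a : 'I_K -> Phi -> T -> R)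
  (theta : Theta) (phi : Phi) (tau : R) (x : T) : R :=
  \sum_(k < K) gate_p a phi tau k x * f k theta x.

Definition conf_region (a : 'I_K -> Phi -> T -> R) (phi : Phi) (tau eps : R) : set T :=
  [set x | 1 - eps < \big[Num.max/0]_(k < K) gate_p a phi tau k x].

Definition mis_event (Omega : 'I_K -> set T) (a : 'I_K -> Phi -> T -> R)
  (pi : {perm 'I_K}) (phi : Phi) (tau eps : R) : set T :=
  [set x | exists k j, Omega k x /\ j != pi k /\ 1 - eps <= gate_p a phi tau j x]
  `&` conf_region a phi tau eps.

End MoE.

Definition admissible {d} {T : measurableType d} {R : realType} {K : nat} {Theta : Type}
  (P : probability T R) (Omega : 'I_K -> set T) (fstar : 'I_K -> T -> R)
  (f : 'I_K -> Theta -> T -> R) (gamma eta : R) (theta : Theta) (pi : {perm 'I_K}) : Prop :=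
  forall k j : 'I_K, j != pi k ->
    (P (Omega k `&` [set x | ((f j theta x - fstar k x) ^+ 2 <= gamma)%R]) <= eta%:E)%E.

From HB Require Import structures.
From mathcomp Require Import all_boot all_order all_algebra all_fingroup.
From mathcomp Require Import all_classical all_reals all_analysis.
From mathcomp Require Import measurable_realfun.
From mathcomp.algebra_tactics Require Import lra.
Set Implicit Arguments. Unset Strict Implicit. Unset Printing Implicit Defensive.
Import Order.TTheory GRing.Theory Num.Theory.
Local Open Scope classical_set_scope.
Local Open Scope ring_scope.

(* Let x in the teacher region Omega_k be routed by the gate, with weight at least
   1 - eps, to an expert j <> pi k.  The student output is then within
   2 eps Bstu <= sqrt(gamma)/2 of f_j(x), so if moreover (f_j(x) - f*_k(x))^2 > gamma,
   the squared error at x is at least gamma/4.  The points where some unmatched pair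
   (k, j) violates this gap form a set of probability at most K(K-1) eta by
   admissibility and a union bound; integrating the pointwise bound over the rest of
   the misrouting event gives both claims. *)

Lemma norm_mixture_sub_le (R : realFieldType) (I : finType) (p v : I -> R)
    (j : I) (M : R) :
  (forall i, 0 <= p i) -> \sum_i p i = 1 -> (forall i, `|v i| <= M) ->
  `|\sum_i p i * v i - v j| <= (1 - p j) * (2 * M).
Proof.
move=> p_ge0 p_sum1 vM.
have -> : \sum_i p i * v i - v j = \sum_(i | i != j) p i * (v i - v j).
  rewrite -{1}[v j]mul1r -{1}p_sum1 mulr_suml -sumrB (bigD1 j) //= subrr add0r.
  by apply: eq_bigr => i _; rewrite mulrBr.
have -> : 1 - p j = \sum_(i | i != j) p i by rewrite -p_sum1 (bigD1 j) //= addrC addrK.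
rewrite mulr_suml; apply: le_trans (ler_norm_sum _ _ _) (ler_sum _ _) => i _.
rewrite normrM ger0_norm //; apply: ler_wpM2l => //.
by apply: le_trans (ler_normB _ _) _; rewrite mulr2n mulrDl mul1r lerD.
Qed.

Lemma sqrrD_ge_quarter (R : realFieldType) (s w v : R) :
  0 <= s -> s < `|w| -> `|v| <= s / 2 -> s ^+ 2 / 4 <= (w + v) ^+ 2.
Proof.
move=> s_ge0 s_lt_w v_le.
have : s / 2 <= `|w + v| by have := lerB_normD w v; lra.
rewrite -(real_normK (num_real (w + v))); nra.
Qed.

Lemma misrouted_mixture_sqr_ge (R : rcfType) (I : finType) (p v : I -> R)
    (j : I) (y M gamma eps : R) :
  (forall i, 0 <= p i) -> \sum_i p i = 1 -> (forall i, `|v i| <= M) ->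
  0 <= gamma -> 2 * eps * M <= 1 / 2 * Num.sqrt gamma ->
  1 - eps <= p j -> gamma < (v j - y) ^+ 2 ->
  gamma / 4 <= (y - \sum_i p i * v i) ^+ 2.
Proof.
move=> p_ge0 p_sum1 vM gamma_ge0 epsM pj gap.
have M_ge0 : 0 <= M := le_trans (normr_ge0 _) (vM j).
have far : Num.sqrt gamma < `|y - v j|.
  by rewrite distrC -sqrtr_sqr ltr_sqrt // (le_lt_trans gamma_ge0 gap).
have near : `|v j - \sum_i p i * v i| <= Num.sqrt gamma / 2.
  rewrite distrC; apply: le_trans (norm_mixture_sub_le _ p_ge0 p_sum1 vM) _.
  nra.
rewrite -[gamma](sqr_sqrtr gamma_ge0) (_ : y - _ = (y - v j) + (v j - \sum_i p i * v i)).
  exact: sqrrD_ge_quarter (sqrtr_ge0 _) far near.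
by rewrite addrA subrK.
Qed.

Section softmax_gate.
Context {R : realType} {T : Type} {K : nat} {Phi : Type}.
Variables (a : 'I_K -> Phi -> T -> R) (ph : Phi) (tau : R).

Lemma gate_p_ge0 k x : 0 <= gate_p a ph tau k x.
Proof. by rewrite divr_ge0 ?expR_ge0 ?sumr_ge0 // => j _; rewrite expR_ge0. Qed.

Lemma gate_den_gt0 (k : 'I_K) x : 0 < \sum_j expR (a j ph x / tau).
Proof.
rewrite (bigD1 k) //=; apply: ltr_pwDl; first exact: expR_gt0.
by apply: sumr_ge0 => j _; exact: expR_ge0.
Qed.

Lemma sum_gate_p (k : 'I_K) x : \sum_j gate_p a ph tau j x = 1.
Proof. by rewrite -mulr_suml mulfV // gt_eqF // (gate_den_gt0 k). Qed.

Lemma gate_pE k x :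
  gate_p a ph tau k x = expR (a k ph x / tau - ln (\sum_j expR (a j ph x / tau))).
Proof. by rewrite expRB lnK // posrE (gate_den_gt0 k). Qed.

End softmax_gate.

Lemma bigsetUP (T : Type) (I : finType) (P : pred I) (F : I -> set T) x :
  (\big[setU/set0]_(i | P i) F i) x <-> exists2 i, P i & F i x.
Proof.
rewrite -bigcup_seq_cond; split => [[i /= /andP[_ Pi] Fix]|[i Pi Fix]].
  by exists i.
by exists i => //=; rewrite mem_index_enum.
Qed.

Section measure_lemmas.
Context d (T : measurableType d) (R : realType).

Lemma measurable_ltr_set (f g : T -> R) :
  measurable_fun setT f -> measurable_fun setT g -> measurable [set x | f x < g x].
Proof.
move=> mf mg; rewrite -[X in measurable X]setTI.
exact: (measurable_fun_ltr mf mg measurableT (Y := [set true])).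
Qed.

Lemma measurable_ler_set (f g : T -> R) :
  measurable_fun setT f -> measurable_fun setT g -> measurable [set x | f x <= g x].
Proof.
move=> mf mg; rewrite -[X in measurable X]setTI.
exact: (measurable_fun_ler mf mg measurableT (Y := [set true])).
Qed.

Lemma measurable_bigmaxr (I : Type) (r : seq I) (h : I -> T -> R) :
  (forall i, measurable_fun setT (h i)) ->
  measurable_fun setT (fun x => \big[Num.max/0]_(i <- r) h i x).
Proof.
move=> mh; elim: r => [|i r ihr].
  by under eq_fun do rewrite big_nil; exact: measurable_cst.
by under eq_fun do rewrite big_cons; exact: measurable_maxr.
Qed.

Lemma measure_bigsetU_le (mu : {measure set T -> \bar R}) (I : Type) (r : seq I)
    (P : pred I) (F : I -> set T) :
  (forall i, P i -> measurable (F i)) ->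
  (mu (\big[setU/set0]_(i <- r | P i) F i) <= \sum_(i <- r | P i) mu (F i))%E.
Proof.
move=> mF; elim: r => [|i r ihr]; first by rewrite !big_nil measure0.
rewrite !big_cons; case: ifPn => // Pi.
apply: le_trans (measureU2 _ (mF i Pi) (bigsetU_measurable _ mF)) _.
exact: leeD.
Qed.

Lemma ge0_integral_ge_measure (mu : {measure set T -> \bar R}) (A D : set T)
    (g : T -> \bar R) (c : R) :
  measurable A -> measurable D -> A `<=` D -> measurable_fun D g ->
  (forall x, D x -> (0 <= g x)%E) -> 0 <= c -> (forall x, A x -> (c%:E <= g x)%E) ->
  (c%:E * mu A <= \int[mu]_(x in D) g x)%E.
Proof.
move=> mA mD AD mg g_ge0 c_ge0 cg; rewrite -(integral_cst mu mA).
apply: le_trans (ge0_subset_integral mu mA mD mg g_ge0 AD).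
by apply: ge0_le_integral => //; exact: measurable_funS mg.
Qed.

End measure_lemmas.

Section gate_measurability.
Context d (T : measurableType d) (R : realType) (K : nat) (Phi : Type).
Variables (a : 'I_K -> Phi -> T -> R) (ph : Phi) (tau : R).
Hypothesis ma : forall k, measurable_fun setT (a k ph).

Lemma measurable_gate_p k : measurable_fun setT (gate_p a ph tau k).
Proof.
have mexp j : measurable_fun setT (fun x => expR (a j ph x / tau)).
  by apply: measurableT_comp => //; exact: measurable_funM.
rewrite (funext (gate_pE a ph tau k)).
apply: measurableT_comp => //; apply: measurable_funB; first exact: measurable_funM.
by apply: measurableT_comp => //; exact: measurable_sum.
Qed.

Lemma measurable_conf_region eps : measurable (conf_region a ph tau eps).
Proof.
apply: measurable_ltr_set; first exact: measurable_cst.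
by apply: measurable_bigmaxr => k; exact: measurable_gate_p.
Qed.

End gate_measurability.

Lemma teacher_mu_on (R : realType) (T : Type) (K : nat) (Omega : 'I_K -> set T)
    (fstar : 'I_K -> T -> R) (k : 'I_K) x :
  (forall k l, k != l -> Omega k `&` Omega l = set0) ->
  Omega k x -> teacher_mu Omega fstar x = fstar k x.
Proof.
move=> Omega_disj Okx; rewrite /teacher_mu (bigD1 k) //= indicE mem_set // mul1r.
rewrite big1 ?addr0 // => l lk; rewrite indicE memNset ?mul0r // => Olx.
by have : (Omega l `&` Omega k) x by []; rewrite Omega_disj.
Qed.

Section misrouting.
Context d (T : measurableType d) (R : realType) (P : probability T R) (K : nat)
  (Theta Phi : Type).
Variables (Omega : 'I_K -> set T) (fstar : 'I_K -> T -> R)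
  (f : 'I_K -> Theta -> T -> R) (a : 'I_K -> Phi -> T -> R).
Variables (Bstu gamma eta eps tau : R) (th : Theta) (ph : Phi) (pi : {perm 'I_K}).
Hypotheses (mOmega : forall k, measurable (Omega k))
  (mfstar : forall k, measurable_fun setT (fstar k))
  (mf : forall k, measurable_fun setT (f k th))
  (ma : forall k, measurable_fun setT (a k ph)).
Hypotheses (Omega_disj : forall k l, k != l -> Omega k `&` Omega l = set0)
  (f_bounded : forall k x, `|f k th x| <= Bstu)
  (gamma_ge0 : 0 <= gamma) (eps_Bstu : 2 * eps * Bstu <= 1 / 2 * Num.sqrt gamma).

Definition near_teacher k j :=
  Omega k `&` [set x | (f j th x - fstar k x) ^+ 2 <= gamma].

Definition gap_violation :=
  \big[setU/set0]_(k < K) \big[setU/set0]_(j < K | j != pi k) near_teacher k j.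

Definition routed_to k j := Omega k `&` [set x | 1 - eps <= gate_p a ph tau j x].

Local Notation mis := (mis_event Omega a pi ph tau eps).
Local Notation sqr_err x :=
  ((teacher_mu Omega fstar x - student_h f a th ph tau x) ^+ 2).

Lemma mis_eventE : mis =
  (\big[setU/set0]_(k < K) \big[setU/set0]_(j < K | j != pi k) routed_to k j)
  `&` conf_region a ph tau eps.
Proof.
apply/seteqP; split => x [misx confx]; split => //.
  case: misx => k [j [Okx [jk pj]]].
  by apply/bigsetUP; exists k => //; apply/bigsetUP; exists j.
case/bigsetUP: misx => k _ /bigsetUP[j jk [Okx pj]].
by exists k, j.
Qed.

Lemma measurable_mis_event : measurable mis.
Proof.
rewrite mis_eventE; apply: measurableI; last exact: measurable_conf_region.
apply: bigsetU_measurable => k _; apply: bigsetU_measurable => j _.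
apply: measurableI => //; apply: measurable_ler_set; first exact: measurable_cst.
exact: measurable_gate_p.
Qed.

Lemma measurable_near_teacher k j : measurable (near_teacher k j).
Proof.
apply: measurableI => //; apply: measurable_ler_set; last exact: measurable_cst.
by apply: measurable_funX; exact: measurable_funB.
Qed.

Lemma measurable_gap_violation : measurable gap_violation.
Proof.
apply: bigsetU_measurable => k _; apply: bigsetU_measurable => j _.
exact: measurable_near_teacher.
Qed.

Lemma measure_gap_violation_le : admissible P Omega fstar f gamma eta th pi ->
  (P gap_violation <= ((K * (K - 1))%:R * eta)%:E)%E.
Proof.
move=> adm.
have P_near k : (P (\big[setU/set0]_(j < K | j != pi k) near_teacher k j)
    <= \sum_(j < K | j != pi k) eta%:E)%E.
  apply: (le_trans (measure_bigsetU_le P _ (fun j _ => measurable_near_teacher k j))).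
  by apply: lee_sum => j jk; exact: adm.
apply: (le_trans (measure_bigsetU_le P _ (fun k _ => bigsetU_measurable _
  (fun j _ => measurable_near_teacher k j)))).
apply: (le_trans (lee_sum _ (fun k _ => P_near k))).
under eq_bigr do rewrite sumEFin sumr_const cardC1 card_ord.
by rewrite sumEFin sumr_const card_ord lee_fin -mulrnA mulr_natl mulnC subn1.
Qed.

Lemma sqr_err_ge_misrouted x : (mis `\` gap_violation) x -> gamma / 4 <= sqr_err x.
Proof.
move=> [[[k [j [Okx [jk pj]]]] _] not_near].
have gap : gamma < (f j th x - fstar k x) ^+ 2.
  rewrite ltNge; apply/negP => near; apply: not_near.
  by apply/bigsetUP; exists k => //; apply/bigsetUP; exists j.
rewrite (teacher_mu_on _ Omega_disj Okx).
exact: (misrouted_mixture_sqr_ge (fun i => gate_p_ge0 a ph tau i x)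
  (sum_gate_p a ph tau j x) (f_bounded ^~ x) gamma_ge0 eps_Bstu pj gap).
Qed.

Lemma measurable_sqr_err : measurable_fun setT (fun x => sqr_err x).
Proof.
apply: measurable_funX; apply: measurable_funB.
  by apply: measurable_sum => k; apply: measurable_funM.
apply: measurable_sum => k; apply: measurable_funM => //.
exact: measurable_gate_p.
Qed.

Lemma integral_conf_sqr_err_ge :
  ((gamma / 4)%:E * P (mis `\` gap_violation)
    <= \int[P]_(x in conf_region a ph tau eps) (sqr_err x)%:E)%E.
Proof.
apply: ge0_integral_ge_measure.
- exact: measurableD measurable_mis_event measurable_gap_violation.
- exact: measurable_conf_region.
- by move=> x [[_ ?] _].
- by apply/measurable_EFinP; apply: measurable_funS measurable_sqr_err.
- by move=> x _; rewrite lee_fin sqr_ge0.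
- by rewrite divr_ge0.
- by move=> x misx; rewrite lee_fin sqr_err_ge_misrouted.
Qed.

Lemma measure_mis_event_le : admissible P Omega fstar f gamma eta th pi ->
  (P mis <= P (mis `\` gap_violation) + ((K * (K - 1))%:R * eta)%:E)%E.
Proof.
move=> adm; rewrite (measureDI P measurable_mis_event measurable_gap_violation).
apply: leeD => //; apply: le_trans (measure_gap_violation_le adm).
exact: measureIr measurable_mis_event measurable_gap_violation.
Qed.

End misrouting.

Theorem mainTheorem12 (d : measure_display) (T : measurableType d) (R : realType)
  (P : probability T R) (K : nat) (Theta Phi : Type)
  (Omega : 'I_K -> set T) (fstar : 'I_K -> T -> R)
  (f : 'I_K -> Theta -> T -> R) (a : 'I_K -> Phi -> T -> R)
  (B Bstu gamma eta eps : R)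
  (hOmega_meas : forall k, measurable (Omega k))
  (hOmega_disj : forall k l, k != l -> Omega k `&` Omega l = set0)
  (hOmega_cover : \bigcup_(k in [set: 'I_K]) Omega k = [set: T])
  (hfstar_meas : forall k, measurable_fun [set: T] (fstar k))
  (hf_meas : forall k th, measurable_fun [set: T] (f k th))
  (ha_meas : forall k ph, measurable_fun [set: T] (a k ph))
  (hmuB : {ae P, forall x, `|teacher_mu Omega fstar x| <= B})
  (hBstu : forall k th x, `|f k th x| <= Bstu)
  (hgamma : 0 < gamma) (heta0 : 0 <= eta) (heta1 : eta < 1)
  (hgap : forall th : Theta, exists pi : {perm 'I_K},
      admissible P Omega fstar f gamma eta th pi)
  (heps0 : 0 < eps) (heps1 : eps < 1 / 2)
  (hepsB : 2 * eps * Bstu <= 1 / 2 * Num.sqrt gamma) :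
  forall (th : Theta) (ph : Phi) (tau : R), 0 < tau ->
  forall pi : {perm 'I_K}, admissible P Omega fstar f gamma eta th pi ->
    ((\int[P]_(x in conf_region a ph tau eps)
        ((teacher_mu Omega fstar x - student_h f a th ph tau x) ^+ 2)%:E
      >= (gamma / 4)%:E *
         maxe (P (mis_event Omega a pi ph tau eps) - ((K * (K - 1))%:R * eta)%:E) 0)
    /\
    (forall Rb : R,
      \int[P]_x ((teacher_mu Omega fstar x - student_h f a th ph tau x) ^+ 2)%:E
        <= Rb%:E ->
      P (mis_event Omega a pi ph tau eps)
        <= (4 * Rb / gamma + (K * (K - 1))%:R * eta)%:E))%E.
Proof.
move=> th ph tau _ pi adm.
have mf := hf_meas ^~ th; have ma := ha_meas ^~ ph.
have lower := integral_conf_sqr_err_ge P tau pi hOmega_meas hfstar_meas mf ma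
  hOmega_disj (fun k => hBstu k th) (ltW hgamma) hepsB.
have mis_le := measure_mis_event_le eps tau hOmega_meas hfstar_meas mf ma adm.
have gamma4_gt0 : 0 < gamma / 4 by rewrite divr_gt0.
split.
  apply: le_trans lower; apply: lee_wpmul2l; first by rewrite lee_fin ltW.
  by rewrite ge_max measure_ge0 andbT leeBlDr.
move=> Rb int_le; apply: le_trans mis_le _; rewrite EFinD leeD2r //.
rewrite mulrAC -invf_div EFinM lee_pdivlMl //; apply: le_trans lower _.
apply: le_trans int_le; apply: ge0_subset_integral => //.
- exact: measurable_conf_region.
- exact/measurable_EFinP/measurable_sqr_err.
- by move=> x _; rewrite lee_fin sqr_ge0.
Qed.
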